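(* Let $(G,k,d)$ be an instance of \textsc{Contraction(vc)} such that $G$ is connected, $k<\mathrm{rank}(G)$ and $2d\le k$. Then $(G,k,d)$ is a Yes-instance if and only if $d<\mathrm{vc}(G)$.
   Context: All graphs are finite, simple and undirected. $\mathrm{vc}(G)$ denotes the minimum size of a vertex cover of $G$. For an edge $e=uv$, $G/e$ is obtained from $G$ by deleting $u$ and $v$ and adding a new vertex adjacent to every vertex of $(N(u)\cup N(v))\setminus\{u,v\}$ (no loops or parallel edges are created); for $F\subseteq E(G)$, $G/F$ denotes the graph obtained by contracting all edges of $F$. $\mathrm{rank}(G)$ is $|V(G)|$ minus the number of connected components of $G$. An instance $(G,k,d)$ of \textsc{Contraction(vc)} (graph $G$, non-negative integers $k,d$) is a Yes-instance iff there exists $F\subseteq E(G)$ with $|F|\le k$ and $\mathrm{vc}(G/F)\le \mathrm{vc}(G)-d$. *)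

(* A simple graph G is a finType T of vertices with a
   symmetric irreflexive adjacency relation e : rel T. *)
From mathcomp Require Import all_boot.
Set Implicit Arguments. Unset Strict Implicit. Unset Printing Implicit Defensive.

Section Graphs.
Variable T : finType.

Definition is_vcover (V : {set T}) (E : rel T) (S : {set T}) : bool :=
  (S \subset V) &&
  [forall x in V, forall y in V, E x y ==> (x \in S) || (y \in S)].

(* minimum size of a vertex cover (V itself is always a cover) *)
Definition vc_on (V : {set T}) (E : rel T) : nat :=
  #|[arg min_(S < V | is_vcover V E S) #|S|]|.

Definition edges (e : rel T) : {set {set T}} :=
  [set [set x; y] | x in T, y in T & e x y].

Definition components (r : rel T) : {set {set T}} :=
  [set [set y | connect r x y] | x in T].

Definition rank (e : rel T) : nat := #|T| - #|components e|.

Definition frel (F : {set {set T}}) : rel T := fun x y => [set x; y] \in F.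

End Graphs.

(* G/F: vertices are the components of (V(G), F); two distinct such
   classes are adjacent iff some edge of G joins them. *)
Definition contr_vertices (T : finType) (F : {set {set T}}) : {set {set T}} :=
  components (frel F).

Definition contr_adj (T : finType) (e : rel T) : rel {set T} :=
  fun A B => (A != B) && [exists x in A, exists y in B, e x y].

Definition vc (T : finType) (e : rel T) : nat := vc_on [set: T] e.

Definition vc_contr (T : finType) (e : rel T) (F : {set {set T}}) : nat :=
  vc_on (contr_vertices F) (contr_adj e).

Definition contraction_vc_yes (T : finType) (e : rel T) (k d : nat) : Prop :=
  exists F : {set {set T}},
    [/\ F \subset edges e, #|F| <= k & vc_contr e F + d <= vc e].

(* Let S be a minimum vertex cover and r a vertex of S. In a connected graph, every
   vertex of S outside a connected set Z containing r is reached from Z by a walk of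
   length at most 2 ending in S, since a walk leaving Z avoids S for at most one step.
   Contracting such walks, 2d edges merge d+1 vertices of S into the class of r, and
   the images of S form a vertex cover of G/F of size at most |S| - d. Conversely, if
   d >= vc(G) then vc(G/F) = 0, so G/F has no edge; as G is connected this forces F
   to connect all of V(G), which needs |V(G)| - 1 > k edges. *)

From Pilot Require Import Defs.
From mathcomp Require Import all_boot zify.
Set Implicit Arguments. Unset Strict Implicit. Unset Printing Implicit Defensive.

Section VertexCovers.
Variable T : finType.
Implicit Types (V S : {set T}) (E : rel T).

Lemma vcoverP V E S :
  reflect (S \subset V /\ {in V &, forall x y, E x y -> (x \in S) || (y \in S)})
          (is_vcover V E S).
Proof.
apply: (iffP andP) => -[sSV cover]; split=> //.
  move=> x y xV yV; move/forall_inP: cover => /(_ x xV) /forall_inP /(_ y yV).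
  exact/implyP.
by apply/forall_inP => x xV; apply/forall_inP => y yV; apply/implyP; exact: cover.
Qed.

Lemma vcoverT_edge E S x y : is_vcover [set: T] E S -> E x y -> (x \in S) || (y \in S).
Proof. by case/vcoverP => _ cover; apply: cover; rewrite inE. Qed.

Lemma vcover_self V E : is_vcover V E V.
Proof. by apply/vcoverP; split=> // x y ->. Qed.

Lemma vc_on_min V E S : is_vcover V E S -> vc_on V E <= #|S|.
Proof. by rewrite /vc_on; case: arg_minnP => [|C _ minC]; [exact: vcover_self | exact: minC]. Qed.

Lemma vc_on_witness V E : exists2 S, is_vcover V E S & vc_on V E = #|S|.
Proof. by rewrite /vc_on; case: arg_minnP => [|C coverC _]; [exact: vcover_self | exists C]. Qed.

Lemma vc_on_gt0 V E x y : x \in V -> y \in V -> E x y -> 0 < vc_on V E.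
Proof.
move=> xV yV Exy; have [S /vcoverP [_ cover] ->] := vc_on_witness V E.
by apply/card_gt0P; case/orP: (cover x y xV yV Exy) => ?; [exists x | exists y].
Qed.

End VertexCovers.

Lemma connect_exit (T : finType) (R : rel T) (Z : {set T}) x y :
  x \in Z -> connect R x y -> y \notin Z ->
  exists x' y', [/\ x' \in Z, y' \notin Z & R x' y'].
Proof.
move=> xZ /connectP [p Rp ->]; elim: p x xZ Rp => [|z p IH] x xZ /=.
  by rewrite xZ.
case/andP=> Rxz Rp; case: (boolP (z \in Z)) => [zZ|zNZ]; first exact: IH Rp.
by exists x, z.
Qed.

Section Contraction.
Variable T : finType.
Implicit Types (F : {set {set T}}) (e : rel T) (S Z : {set T}).

Definition contr_class F (x : T) : {set T} := [set y | connect (Defs.frel F) x y].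

Lemma edges_mem e x y : e x y -> [set x; y] \in edges e.
Proof. by move=> exy; apply/imset2P; exists x y; rewrite ?inE. Qed.

Lemma contr_class_refl F x : x \in contr_class F x.
Proof. by rewrite inE connect0. Qed.

Lemma contr_class_vertex F x : contr_class F x \in contr_vertices F.
Proof. exact: imset_f. Qed.

Lemma contr_verticesP F A : A \in contr_vertices F -> exists x, A = contr_class F x.
Proof. by case/imsetP => x _ ->; exists x. Qed.

Lemma contr_class_eq F x y : y \in contr_class F x -> contr_class F y = contr_class F x.
Proof.
have symF : connect_sym (Defs.frel F).
  by apply: sym_connect_sym => u v; rewrite /Defs.frel setUC.
rewrite inE => xy; apply/setP => z; rewrite !inE.
by rewrite (same_connect symF xy).
Qed.

Lemma contr_class_subset F F' x : F \subset F' -> contr_class F x \subset contr_class F' x.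
Proof.
move=> sFF'; apply/subsetP => y; rewrite !inE; apply: connect_sub => u v Fuv.
by apply: connect1; rewrite /Defs.frel (subsetP sFF' _ Fuv).
Qed.

Lemma contr_class_add F r x y :
  x \in contr_class F r -> y \in contr_class ([set x; y] |: F) r.
Proof.
move=> /(subsetP (contr_class_subset r (subsetUr [set [set x; y]] F))).
rewrite !inE => rx; apply: connect_trans rx (connect1 _).
by rewrite /Defs.frel setU11.
Qed.

Lemma contr_class_walk e F r x p :
  F \subset edges e -> x \in contr_class F r -> path e x p ->
  exists F', [/\ F' \subset edges e, #|F'| <= #|F| + size p,
    contr_class F r \subset contr_class F' r & last x p \in contr_class F' r].
Proof.
elim: p x F => [|y p IH] x F sFe xF /=; first by exists F; rewrite addn0 subxx.
case/andP=> exy ep; set F1 := [set x; y] |: F.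
have sF1e : F1 \subset edges e by rewrite subUset sub1set edges_mem.
have [F' [sF'e cardF' sub1 lastF']] := IH y F1 sF1e (contr_class_add y xF) ep.
exists F'; split=> //.
- apply: leq_trans cardF' _; rewrite /F1 cardsU1 addnS -addSn leq_add2r.
  by rewrite -add1n leq_add2r leq_b1.
- exact: subset_trans (contr_class_subset r (subsetUr _ _)) sub1.
Qed.

Lemma cover_vertex_near e S Z z s :
  is_vcover [set: T] e S -> z \in Z -> connect e z s -> s \in S -> s \notin Z ->
  exists x p, [/\ x \in Z, path e x p, size p <= 2, last x p \in S & last x p \notin Z].
Proof.
move=> coverS zZ zs sS sNZ.
pose A := Z :|: [set y | [exists x in Z, e x y]].
have [sA | sNA] := boolP (s \in A).
  move: sA; rewrite !inE (negbTE sNZ) => /exists_inP [x xZ exs].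
  by exists x, [:: s]; rewrite /= exs.
have zA : z \in A by rewrite inE zZ.
have [y [y' [yA y'NA eyy']]] := connect_exit zA zs sNA.
move: y'NA; rewrite !inE negb_or negb_exists_in => /andP [y'NZ /forall_inP y'NZ1].
have yNZ : y \notin Z by apply/negP => yZ; move: (y'NZ1 y yZ); rewrite eyy'.
move: yA; rewrite !inE (negbTE yNZ) => /exists_inP [x xZ exy].
case/orP: (vcoverT_edge coverS eyy') => [yS | y'S].
  by exists x, [:: y]; rewrite /= exy.
by exists x, [:: y; y']; rewrite /= exy eyy'.
Qed.

Lemma contr_class_absorb e S r j :
  (forall x y, connect e x y) -> is_vcover [set: T] e S -> r \in S -> j < #|S| ->
  exists F, [/\ F \subset edges e, #|F| <= 2 * j & j < #|S :&: contr_class F r|].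
Proof.
move=> conn coverS rS; elim: j => [|j IH] ltjS.
  exists set0; rewrite sub0set cards0; split=> //.
  by apply/card_gt0P; exists r; rewrite inE rS contr_class_refl.
have [F [sFe cardF ltjSF]] := IH (ltnW ltjS).
set Z := contr_class F r in ltjSF.
have [sSZ | /subsetPn [s sS sNZ]] := boolP (S \subset Z).
  exists F; rewrite (setIidPl sSZ) mulnSr; split=> //.
  exact: leq_trans cardF (leq_addr _ _).
have [x [p [xZ ep sizep lastS lastNZ]]] :=
  cover_vertex_near coverS (contr_class_refl F r) (conn r s) sS sNZ.
have [F' [sF'e cardF' sZZ' lastZ']] := contr_class_walk sFe xZ ep.
exists F'; split=> //.
  by apply: leq_trans cardF' _; rewrite mulnSr leq_add.
apply: leq_ltn_trans ltjSF (proper_card _); apply/properP; split; first exact: setIS.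
by exists (last x p); rewrite in_setI ?lastS ?lastZ' // negb_and lastNZ orbT.
Qed.

Lemma contr_vcover e F S :
  is_vcover [set: T] e S -> is_vcover (contr_vertices F) (contr_adj e) (contr_class F @: S).
Proof.
move=> coverS; apply/vcoverP; split.
  by apply/subsetP => _ /imsetP [x _ ->]; exact: contr_class_vertex.
move=> _ _ /contr_verticesP [a ->] /contr_verticesP [b ->].
case/andP=> _ /exists_inP [x xa /exists_inP [y yb exy]].
rewrite -(contr_class_eq xa) -(contr_class_eq yb).
case/orP: (vcoverT_edge coverS exy) => [xS | yS]; first by rewrite (imset_f _ xS).
by rewrite (imset_f _ yS) orbT.
Qed.

Lemma card_contr_class_imset F S r :
  #|contr_class F @: S| + #|S :&: contr_class F r| <= #|S|.+1.
Proof.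
set Z := contr_class F r.
have collapse : contr_class F @: (S :&: Z) \subset [set Z].
  by apply/subsetP => _ /imsetP [x /setIP [_ xZ] ->]; rewrite inE (contr_class_eq xZ).
have card_out : #|contr_class F @: (S :\: Z)| <= #|S :\: Z| := leq_imset_card _ _.
have card_in : #|contr_class F @: (S :&: Z)| <= 1.
  by rewrite -(cards1 Z) subset_leq_card.
have := cardsID Z S.
have := (leq_card_setU (contr_class F @: (S :&: Z)) (contr_class F @: (S :\: Z))).1.
rewrite -imsetU setID; lia.
Qed.

Lemma vc_contr_le e F S r :
  is_vcover [set: T] e S -> vc_contr e F + #|S :&: contr_class F r| <= #|S|.+1.
Proof.
move=> coverS; apply: leq_trans (card_contr_class_imset F S r).
by rewrite leq_add2r; exact: vc_on_min (contr_vcover F coverS).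
Qed.

End Contraction.

Section Spanning.
Variable T : finType.
Implicit Types (F : {set {set T}}) (e : rel T).

Lemma rank_le_pred_card e : rank e <= #|T|.-1.
Proof.
rewrite /rank; case: (posnP #|T|) => [-> //|/card_gt0P [x _]].
suff : 0 < #|components e| by lia.
by apply/card_gt0P; exists [set y | connect e x y]; exact: imset_f.
Qed.

Lemma connected_subset_grow F :
  (forall x y, connect (Defs.frel F) x y) ->
  forall m, m < #|T| -> exists Z : {set T}, #|Z| = m.+1 /\ m <= #|[set f in F | f \subset Z]|.
Proof.
move=> conn; elim=> [|m IH] ltmT.
  by have [x _] := card_gt0P ltmT; exists [set x]; rewrite cards1.
have [Z [cardZ cardFZ]] := IH (ltnW ltmT).
have [z zZ] : exists z, z \in Z by apply/card_gt0P; rewrite cardZ.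
have [y yNZ] : exists y, y \in ~: Z by apply/card_gt0P; rewrite cardsCs setCK cardZ; lia.
rewrite inE in yNZ.
have [x [y' [xZ y'NZ Fxy']]] := connect_exit zZ (conn z y) yNZ.
set FZ := [set f in F | f \subset Z].
have e0F : [set x; y'] \in F := Fxy'.
have y'e0 : y' \in [set x; y'] by rewrite !inE eqxx orbT.
have e0NFZ : [set x; y'] \notin FZ.
  by rewrite inE negb_and; apply/orP; right; apply/subsetPn; exists y'.
have sub : [set x; y'] |: FZ \subset [set f in F | f \subset y' |: Z].
  apply/subsetP => f; rewrite !inE => /orP [/eqP -> | /andP [Ff sfZ]].
    by rewrite e0F; apply/subsetP => v; rewrite !inE => /orP [] /eqP ->; rewrite ?eqxx ?xZ ?orbT.
  by rewrite Ff (subset_trans sfZ (subsetUr _ _)).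
exists (y' |: Z); rewrite cardsU1 y'NZ cardZ; split=> //.
have := subset_leq_card sub; rewrite cardsU1 e0NFZ add1n; exact: leq_ltn_trans cardFZ.
Qed.

Lemma card_le_connecting_edges F :
  (forall x y, connect (Defs.frel F) x y) -> #|T| <= #|F|.+1.
Proof.
move=> conn; case: (posnP #|T|) => [-> //|T_gt0].
have [|Z [_ cardFZ]] := connected_subset_grow conn (m := #|T|.-1); first by rewrite ltn_predL.
have : [set f in F | f \subset Z] \subset F by apply/subsetP => f; rewrite inE => /andP [].
move/subset_leq_card; lia.
Qed.

Lemma vc_contr_gt0 e F :
  (forall x y, connect e x y) -> #|F|.+2 <= #|T| -> 0 < vc_contr e F.
Proof.
move=> conn ltFT.
have [connF | /existsP [a /existsP [b abNF]]] :=
  boolP [forall a, forall b, connect (Defs.frel F) a b].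
  have := card_le_connecting_edges (fun a b => forallP (forallP connF a) b); lia.
have bNa : b \notin contr_class F a by rewrite inE.
have [x [y [xa yNa exy]]] := connect_exit (contr_class_refl F a) (conn a b) bNa.
apply: (vc_on_gt0 (contr_class_vertex F x) (contr_class_vertex F y)).
apply/andP; split.
  by apply: contraNneq yNa => eqxy; rewrite -(contr_class_eq xa) eqxy contr_class_refl.
apply/exists_inP; exists x; rewrite ?contr_class_refl //.
by apply/exists_inP; exists y; rewrite ?contr_class_refl.
Qed.

End Spanning.

Theorem mainTheorem6 (T : finType) (e : rel T) (k d : nat) :
  symmetric e -> irreflexive e ->
  (forall x y : T, connect e x y) ->
  k < rank e -> 2 * d <= k ->
  (contraction_vc_yes e k d <-> d < vc e).
Proof.
move=> _ _ conn lt_k_rank le_2d_k.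
have [S coverS vcS] := vc_on_witness [set: T] e.
rewrite /vc vcS; split.
- case=> F [_ cardF vcF]; rewrite ltnNge; apply/negP => le_S_d.
  have := vc_contr_gt0 (F := F) conn; have := rank_le_pred_card e.
  rewrite /vc vcS in vcF; lia.
- move=> lt_d_S; have [r rS] : exists r, r \in S by apply/card_gt0P; lia.
  have [F [sFe cardF lt_d_SF]] := contr_class_absorb conn coverS rS lt_d_S.
  exists F; split=> //; first exact: leq_trans cardF le_2d_k.
  have := vc_contr_le F r coverS; rewrite /vc vcS; lia.
Qed.
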